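(* For each $i\in\{b,1,2\}$, the function $V_{B_i}(p_1,p_2)$ is convex in $p_1$ (for each fixed $p_2\in[0,1]$) and convex in $p_2$ (for each fixed $p_1\in[0,1]$).
   Context: Fix parameters $0\le\lambda_0\le\lambda_1\le 1$, a discount factor $\beta\in[0,1)$, and rates $0<R_l<R_h<2R_l$. Let $\alpha=\lambda_1-\lambda_0$ and $T(p)=\alpha p+\lambda_0$. The model consists of two independent, identical Gilbert–Elliott channels (state 1 = good, 0 = bad) with $\Pr[\text{good}\mid\text{good}]=\lambda_1$ and $\Pr[\text{good}\mid\text{bad}]=\lambda_0$. The belief state is $(p_1,p_2)\in[0,1]^2$, where $p_i$ is the conditional probability that channel $i$ is good in the current slot. There are three actions, $B_b$, $B_1$ and $B_2$. Let $V:[0,1]^2\to\mathbb R$ be the optimal expected total discounted reward, i.e. the unique bounded function satisfying $V=\max\{V_{B_b},V_{B_1},V_{B_2}\}$, where $V_{B_b}(p_1,p_2)=p_1R_l+p_2R_l+\beta[(1-p_1)(1-p_2)V(\lambda_0,\lambda_0)+p_1(1-p_2)V(\lambda_1,\lambda_0)+(1-p_1)p_2V(\lambda_0,\lambda_1)+p_1p_2V(\lambda_1,\lambda_1)]$, $V_{B_1}(p_1,p_2)=p_1R_h+\beta[(1-p_1)V(\lambda_0,T(p_2))+p_1V(\lambda_1,T(p_2))]$, $V_{B_2}(p_1,p_2)=p_2R_h+\beta[(1-p_2)V(T(p_1),\lambda_0)+p_2V(T(p_1),\lambda_1)]$. *)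

From Stdlib Require Import Reals Lra.
Open Scope R_scope.

(* Belief update of one channel: T(p) = alpha p + lambda0, alpha = lambda1 - lambda0 *)
Definition Tmap (l0 l1 p : R) : R := (l1 - l0) * p + l0.

Inductive action := Bb | B1 | B2.

Definition VB (l0 l1 beta Rl Rh : R) (V : R -> R -> R) (a : action) (p1 p2 : R) : R :=
  match a with
  | Bb => p1 * Rl + p2 * Rl
          + beta * ((1 - p1) * (1 - p2) * V l0 l0 + p1 * (1 - p2) * V l1 l0
                    + (1 - p1) * p2 * V l0 l1 + p1 * p2 * V l1 l1)
  | B1 => p1 * Rh + beta * ((1 - p1) * V l0 (Tmap l0 l1 p2) + p1 * V l1 (Tmap l0 l1 p2))
  | B2 => p2 * Rh + beta * ((1 - p2) * V (Tmap l0 l1 p1) l0 + p2 * V (Tmap l0 l1 p1) l1)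
  end.

Definition in01 (x : R) : Prop := 0 <= x <= 1.

Definition bounded_on_sq (V : R -> R -> R) : Prop :=
  exists M, forall p1 p2, in01 p1 -> in01 p2 -> Rabs (V p1 p2) <= M.

Definition bellman (l0 l1 beta Rl Rh : R) (V : R -> R -> R) : Prop :=
  forall p1 p2, in01 p1 -> in01 p2 ->
    V p1 p2 = Rmax (Rmax (VB l0 l1 beta Rl Rh V Bb p1 p2)
                         (VB l0 l1 beta Rl Rh V B1 p1 p2))
                   (VB l0 l1 beta Rl Rh V B2 p1 p2).

Definition convex_on01 (f : R -> R) : Prop :=
  forall x y t, in01 x -> in01 y -> in01 t ->
    f (t * x + (1 - t) * y) <= t * f x + (1 - t) * f y.

From Pilot Require Import Defs.
From Stdlib Require Import Reals.
From Stdlib Require Import Lra Psatz.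
Open Scope R_scope.

(* Measure how far a function on [0,1] is from being convex by a
   "convexity defect" K: f (t x + (1-t) y) <= t f x + (1-t) f y + K.  The
   Bellman operator contracts the defect by the factor beta:
   - each V_{B_i} is, in each variable separately, either affine in that
     variable, or a constant plus beta times a convex mixture of partial
     functions of V composed with the affine map T (which maps [0,1] into
     itself); hence a defect K of V becomes a defect beta*K of V_{B_i};
   - a pointwise maximum of functions with defect K has defect K, so by the
     Bellman equation V itself again has defect beta*K.
   Since V is bounded by some M, it has defect 2M, hence 2M beta^n for every
   n, hence defect 0 in each variable.  One more application of the first
   point gives defect beta*0 = 0, i.e. convexity, of every V_{B_i}. *)

Definition convex_defect (f : R -> R) (K : R) : Prop :=
  forall x y t, in01 x -> in01 y -> in01 t ->
    f (t * x + (1 - t) * y) <= t * f x + (1 - t) * f y + K.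

Definition sep_convex_defect (V : R -> R -> R) (K : R) : Prop :=
  (forall p2, in01 p2 -> convex_defect (fun p1 => V p1 p2) K) /\
  (forall p1, in01 p1 -> convex_defect (fun p2 => V p1 p2) K).

Lemma in01_comb x y t : in01 x -> in01 y -> in01 t -> in01 (t * x + (1 - t) * y).
Proof. unfold in01; intros; split; nra. Qed.

Lemma in01_Tmap l0 l1 p :
  0 <= l0 -> l0 <= l1 -> l1 <= 1 -> in01 p -> in01 (Tmap l0 l1 p).
Proof. unfold in01, Tmap; intros; split; nra. Qed.

Lemma convex_defect_ext f g K :
  (forall x, in01 x -> f x = g x) -> convex_defect g K -> convex_defect f K.
Proof.
  intros Hfg Hg x y t Hx Hy Ht.
  rewrite (Hfg _ (in01_comb x y t Hx Hy Ht)), (Hfg _ Hx), (Hfg _ Hy).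
  now apply Hg.
Qed.

Lemma convex_defect_mono f K K' : K <= K' -> convex_defect f K -> convex_defect f K'.
Proof. intros HK Hf x y t Hx Hy Ht. specialize (Hf x y t Hx Hy Ht). lra. Qed.

Lemma affine_convex_defect f a b K :
  0 <= K -> (forall x, f x = a * x + b) -> convex_defect f K.
Proof. intros HK Hf x y t _ _ _. rewrite !Hf. lra. Qed.

(* Precomposition with T preserves the defect, T being affine into [0,1]. *)
Lemma convex_defect_Tmap l0 l1 f K :
  0 <= l0 -> l0 <= l1 -> l1 <= 1 ->
  convex_defect f K -> convex_defect (fun x => f (Tmap l0 l1 x)) K.
Proof.
  intros Hl0 Hl01 Hl1 Hf x y t Hx Hy Ht.
  replace (Tmap l0 l1 (t * x + (1 - t) * y))
    with (t * Tmap l0 l1 x + (1 - t) * Tmap l0 l1 y) by (unfold Tmap; ring).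
  apply Hf; auto using in01_Tmap.
Qed.

Lemma convex_defect_mix f g s K :
  in01 s -> convex_defect f K -> convex_defect g K ->
  convex_defect (fun x => (1 - s) * f x + s * g x) K.
Proof.
  intros [Hs0 Hs1] Hf Hg x y t Hx Hy Ht.
  specialize (Hf x y t Hx Hy Ht). specialize (Hg x y t Hx Hy Ht).
  assert (Ef := Rmult_le_compat_l (1 - s) _ _ ltac:(lra) Hf).
  assert (Eg := Rmult_le_compat_l s _ _ Hs0 Hg).
  lra.
Qed.

Lemma convex_defect_discount f c beta K :
  0 <= beta -> convex_defect f K -> convex_defect (fun x => c + beta * f x) (beta * K).
Proof.
  intros Hb Hf x y t Hx Hy Ht.
  specialize (Hf x y t Hx Hy Ht).
  assert (E := Rmult_le_compat_l beta _ _ Hb Hf).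
  lra.
Qed.

Lemma convex_defect_max f g K :
  convex_defect f K -> convex_defect g K -> convex_defect (fun x => Rmax (f x) (g x)) K.
Proof.
  intros Hf Hg x y t Hx Hy Ht.
  specialize (Hf x y t Hx Hy Ht). specialize (Hg x y t Hx Hy Ht).
  destruct Ht as [Ht0 Ht1].
  pose proof (Rmax_l (f x) (g x)). pose proof (Rmax_r (f x) (g x)).
  pose proof (Rmax_l (f y) (g y)). pose proof (Rmax_r (f y) (g y)).
  apply Rmax_lub; nra.
Qed.

Lemma bounded_convex_defect f M :
  (forall x, in01 x -> Rabs (f x) <= M) -> convex_defect f (2 * M).
Proof.
  intros Hb.
  assert (Hbetween : forall x, in01 x -> - M <= f x <= M).
  { intros x Hx. pose proof (Rle_abs (f x)). pose proof (Rle_abs (- f x)).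
    rewrite Rabs_Ropp in *. pose proof (Hb x Hx). lra. }
  intros x y t Hx Hy Ht.
  pose proof (Hbetween _ (in01_comb x y t Hx Hy Ht)).
  pose proof (Hbetween _ Hx). pose proof (Hbetween _ Hy).
  destruct Ht. nra.
Qed.

Lemma convex_defect_zero f :
  (forall e, 0 < e -> convex_defect f e) -> convex_defect f 0.
Proof.
  intros Hf x y t Hx Hy Ht. apply Rnot_lt_le; intro Hlt.
  set (d := f (t * x + (1 - t) * y) - (t * f x + (1 - t) * f y)).
  specialize (Hf (d / 2) ltac:(unfold d; lra) x y t Hx Hy Ht).
  unfold d in Hf. lra.
Qed.

Lemma geometric_eventually_small C beta :
  0 <= C -> 0 <= beta < 1 -> forall e, 0 < e -> exists n, C * beta ^ n < e.
Proof.
  intros HC Hb e He.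
  destruct (pow_lt_1_zero beta ltac:(rewrite Rabs_right; lra) (e / (C + 1))
              ltac:(apply Rdiv_lt_0_compat; lra)) as [N HN].
  exists N. specialize (HN N (le_n N)).
  rewrite Rabs_right in HN by (apply Rle_ge, pow_le; lra).
  apply Rmult_lt_compat_l with (r := C + 1) in HN; [|lra].
  replace ((C + 1) * (e / (C + 1))) with e in HN by (field; lra).
  pose proof (pow_le beta N (proj1 Hb)). nra.
Qed.

Section BellmanContraction.

Variables (l0 l1 beta Rl Rh : R) (V : R -> R -> R).
Hypotheses (Hl0 : 0 <= l0) (Hl01 : l0 <= l1) (Hl1 : l1 <= 1) (Hb0 : 0 <= beta).

Let VBV := VB l0 l1 beta Rl Rh V.

Lemma VB_sep_convex_defect K :
  0 <= K -> sep_convex_defect V K -> forall a, sep_convex_defect (VBV a) (beta * K).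
Proof.
  intros HK [Hrow Hcol] a.
  assert (HbK : 0 <= beta * K) by nra.
  destruct a; split; intros p Hp; unfold VBV; simpl.
  - apply (affine_convex_defect _ (Rl + beta * ((1 - p) * (V l1 l0 - V l0 l0)
                                     + p * (V l1 l1 - V l0 l1)))
             (p * Rl + beta * ((1 - p) * V l0 l0 + p * V l0 l1))); auto.
    intro x; ring.
  - apply (affine_convex_defect _ (Rl + beta * ((1 - p) * (V l0 l1 - V l0 l0)
                                     + p * (V l1 l1 - V l1 l0)))
             (p * Rl + beta * ((1 - p) * V l0 l0 + p * V l1 l0))); auto.
    intro x; ring.
  - apply (affine_convex_defect _ (Rh + beta * (V l1 (Tmap l0 l1 p) - V l0 (Tmap l0 l1 p)))
             (beta * V l0 (Tmap l0 l1 p))); auto.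
    intro x; ring.
  - apply (convex_defect_discount
             (fun x => (1 - p) * V l0 (Tmap l0 l1 x) + p * V l1 (Tmap l0 l1 x))); auto.
    apply convex_defect_mix; auto;
      apply (convex_defect_Tmap l0 l1 (fun x => V _ x)); auto;
      apply Hcol; unfold in01; lra.
  - apply (convex_defect_discount
             (fun x => (1 - p) * V (Tmap l0 l1 x) l0 + p * V (Tmap l0 l1 x) l1)); auto.
    apply convex_defect_mix; auto;
      apply (convex_defect_Tmap l0 l1 (fun x => V x _)); auto;
      apply Hrow; unfold in01; lra.
  - apply (affine_convex_defect _ (Rh + beta * (V (Tmap l0 l1 p) l1 - V (Tmap l0 l1 p) l0))
             (beta * V (Tmap l0 l1 p) l0)); auto.
    intro x; ring.
Qed.

Lemma bellman_sep_convex_defect K :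
  0 <= K -> bellman l0 l1 beta Rl Rh V ->
  sep_convex_defect V K -> sep_convex_defect V (beta * K).
Proof.
  intros HK HB HV.
  pose proof (VB_sep_convex_defect K HK HV Bb) as [Hb1 Hb2].
  pose proof (VB_sep_convex_defect K HK HV Defs.B1) as [H11 H12].
  pose proof (VB_sep_convex_defect K HK HV B2) as [H21 H22].
  split; intros p Hp.
  - apply (convex_defect_ext _
             (fun x => Rmax (Rmax (VBV Bb x p) (VBV Defs.B1 x p)) (VBV B2 x p))).
    + intros x Hx. now apply HB.
    + apply convex_defect_max; [apply convex_defect_max|]; auto.
  - apply (convex_defect_ext _
             (fun x => Rmax (Rmax (VBV Bb p x) (VBV Defs.B1 p x)) (VBV B2 p x))).
    + intros x Hx. now apply HB.
    + apply convex_defect_max; [apply convex_defect_max|]; auto.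
Qed.

End BellmanContraction.

Lemma bellman_sep_convex l0 l1 beta Rl Rh V :
  0 <= l0 -> l0 <= l1 -> l1 <= 1 -> 0 <= beta < 1 ->
  bounded_on_sq V -> bellman l0 l1 beta Rl Rh V -> sep_convex_defect V 0.
Proof.
  intros Hl0 Hl01 Hl1 Hb [M HM] HB.
  assert (HM0 : 0 <= M).
  { assert (h := HM 0 0 ltac:(unfold in01; lra) ltac:(unfold in01; lra)).
    pose proof (Rabs_pos (V 0 0)); lra. }
  assert (Hn : forall n, sep_convex_defect V (2 * M * beta ^ n)).
  { induction n as [|n IH].
    - rewrite pow_O, Rmult_1_r.
      split; intros p Hp; apply bounded_convex_defect; intros x Hx; auto.
    - replace (2 * M * beta ^ S n) with (beta * (2 * M * beta ^ n)) by (simpl; ring).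
      apply (bellman_sep_convex_defect l0 l1 beta Rl Rh V); auto; try lra.
      pose proof (pow_le beta n (proj1 Hb)); nra. }
  assert (Hsmall := geometric_eventually_small (2 * M) beta ltac:(lra) Hb).
  split; intros p Hp; apply convex_defect_zero; intros e He;
    destruct (Hsmall e He) as [n Hlt]; destruct (Hn n) as [Hrow Hcol];
    eapply convex_defect_mono; try apply Rlt_le, Hlt; auto.
Qed.

Theorem lemma2 (l0 l1 beta Rl Rh : R) (V : R -> R -> R)
  (Hl0 : 0 <= l0) (Hl01 : l0 <= l1) (Hl1 : l1 <= 1)
  (Hb0 : 0 <= beta) (Hb1 : beta < 1)
  (HRl : 0 < Rl) (HRlh : Rl < Rh) (HRh : Rh < 2 * Rl)
  (HVb : bounded_on_sq V) (HV : bellman l0 l1 beta Rl Rh V) :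
  forall a : action,
    (forall p2, in01 p2 -> convex_on01 (fun p1 => VB l0 l1 beta Rl Rh V a p1 p2)) /\
    (forall p1, in01 p1 -> convex_on01 (fun p2 => VB l0 l1 beta Rl Rh V a p1 p2)).
Proof.
  intro a.
  assert (HVconv := bellman_sep_convex l0 l1 beta Rl Rh V Hl0 Hl01 Hl1
                      ltac:(lra) HVb HV).
  destruct (VB_sep_convex_defect l0 l1 beta Rl Rh V Hl0 Hl01 Hl1 Hb0 0
              (Rle_refl 0) HVconv a) as [Hrow Hcol].
  rewrite Rmult_0_r in Hrow, Hcol.
  split; intros p Hp x y t Hx Hy Ht.
  - specialize (Hrow p Hp x y t Hx Hy Ht). lra.
  - specialize (Hcol p Hp x y t Hx Hy Ht). lra.
Qed.
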